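(* Let $\tilde t$ be a Linda template and $\tilde b$ a Linda datum (a finite sequence of names). Then ${\sf Match}(\tilde t;\tilde b)=\sigma$ if and only if $\{{\sf patt}(\tilde t)\,\|\,{\sf patb}(\tilde b)\}=(\sigma\cup\{\mathsf c/x\},\{\mathsf c/x_0,\ldots,\mathsf c/x_n\})$, where $\{x_0,\ldots,x_n\}={\sf bn}({\sf patb}(\tilde b))$, ${\sf dom}(\sigma)\uplus\{x\}={\sf bn}({\sf patt}(\tilde t))$, and $\sigma$ maps names to names.
   Context: CPC patterns over a countable set of names: $p ::= \lambda x \mid x \mid \ulcorner x\urcorner \mid p\bullet p$ (binding, variable, protected name, compound; $\bullet$ left associative). ${\sf bn}(p)$ is the set of binding names; communicable patterns contain no protected or binding names. Unification $\{p\|q\}$: $\{x\|x\}=\{x\|\ulcorner x\urcorner\}=\{\ulcorner x\urcorner\|x\}=\{\ulcorner x\urcorner\|\ulcorner x\urcorner\}=(\{\},\{\})$; $\{\lambda x\|q\}=(\{q/x\},\{\})$ and $\{q\|\lambda x\}=(\{\},\{q/x\})$ if $q$ communicable; $\{p_1\bullet p_2\|q_1\bullet q_2\}=(\sigma_1\cup\sigma_2,\rho_1\cup\rho_2)$ if $\{p_i\|q_i\}=(\sigma_i,\rho_i)$; undefined otherwise. Linda templates are sequences $\tilde t=t_1,\ldots,t_k$ of template fields $t::=\lambda x\mid\ulcorner b\urcorner$ ($b$ a name; input variables pairwise distinct), data are sequences of names $\tilde b$. Matching: ${\sf Match}(;)=\{\}$, ${\sf Match}(\ulcorner b\urcorner;b)=\{\}$,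 ${\sf Match}(\lambda x;b)=\{b/x\}$, ${\sf Match}(t,\tilde t;b,\tilde b)=\sigma_1\uplus\sigma_2$ if ${\sf Match}(t;b)=\sigma_1$ and ${\sf Match}(\tilde t;\tilde b)=\sigma_2$ (disjoint union), undefined otherwise. Fix a name $\mathsf c$. The translations into CPC patterns are: ${\sf patt}()=\lambda x\bullet\mathsf c$ with $x$ fresh; ${\sf patt}(t,\tilde t)=t\bullet\mathsf c\bullet{\sf patt}(\tilde t)$ (a template field $\lambda x$ or $\ulcorner b\urcorner$ read as the CPC pattern of the same form, and ${\sf patt}(\tilde t)$ a single sub-pattern); ${\sf patb}()=\mathsf c\bullet\lambda x$ with $x$ fresh; ${\sf patb}(b,\tilde b)=b\bullet\lambda x\bullet{\sf patb}(\tilde b)$ with $x$ fresh. In the claim, $x$ denotes the fresh binding name introduced by the clause ${\sf patt}()$. *)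

From mathcomp Require Import all_boot.
Set Implicit Arguments. Unset Strict Implicit. Unset Printing Implicit Defensive.

Definition name := nat.

(** CPC patterns: p ::= \x | x | 'x' | p . p *)
Inductive pat : Type :=
| PBind : name -> pat
| PVar  : name -> pat
| PProt : name -> pat
| PComp : pat -> pat -> pat.

Fixpoint bn (p : pat) : seq name :=
  match p with
  | PBind x => [:: x]
  | PVar _ | PProt _ => [::]
  | PComp p q => bn p ++ bn q
  end.

Fixpoint communicable (p : pat) : Prop :=
  match p with
  | PVar _ => True
  | PBind _ | PProt _ => False
  | PComp p q => communicable p /\ communicable q
  end.

(** substitutions: finite partial maps from names, represented as functions
    into option; equality of substitutions is extensional equality of these. *)
Definition subst (A : Type) := name -> option A.
Definition sempty {A} : subst A := fun _ => None.
Definition single {A} (x : name) (v : A) : subst A :=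
  fun n => if n == x then Some v else None.
Definition dom {A} (s : subst A) (n : name) : Prop := s n <> None.

(** union of two substitutions viewed as sets of pairs: defined iff they agree
    on their common domain; [sunion_rel s1 s2 s] means s = s1 \cup s2. *)
Definition sunion {A} (s1 s2 : subst A) : subst A :=
  fun n => if s1 n is Some v then Some v else s2 n.
Definition sunion_rel {A} (s1 s2 s : subst A) : Prop :=
  (forall n v w, s1 n = Some v -> s2 n = Some w -> v = w) /\ s = sunion s1 s2.

(** CPC unification {p || q} = (sigma, rho), as a (deterministic) relation *)
Inductive Unify : pat -> pat -> subst pat -> subst pat -> Prop :=
| U_VV x : Unify (PVar x) (PVar x) sempty sempty
| U_VP x : Unify (PVar x) (PProt x) sempty sempty
| U_PV x : Unify (PProt x) (PVar x) sempty sempty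
| U_PP x : Unify (PProt x) (PProt x) sempty sempty
| U_BL x q : communicable q -> Unify (PBind x) q (single x q) sempty
| U_BR x q : communicable q -> Unify q (PBind x) sempty (single x q)
| U_C p1 p2 q1 q2 s1 s2 r1 r2 s r :
    Unify p1 q1 s1 r1 -> Unify p2 q2 s2 r2 ->
    sunion_rel s1 s2 s -> sunion_rel r1 r2 r ->
    Unify (PComp p1 p2) (PComp q1 q2) s r.

Inductive tfield : Type :=
| TBind : name -> tfield
| TProt : name -> tfield.

Definition template := seq tfield.
Definition datum := seq name.

Definition tvars (t : tfield) : seq name :=
  match t with TBind x => [:: x] | TProt _ => [::] end.
Definition tnames (t : tfield) : seq name :=
  match t with TBind x | TProt x => [:: x] end.
Definition input_vars (ts : template) : seq name := flatten (map tvars ts).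
Definition template_names (ts : template) : seq name := flatten (map tnames ts).

Definition sdunion_rel (s1 s2 s : subst name) : Prop :=
  (forall n, dom s1 n -> ~ dom s2 n) /\ s = sunion s1 s2.

Inductive Match : template -> datum -> subst name -> Prop :=
| M_nil : Match [::] [::] sempty
| M_cons t ts b bs s1 s2 s :
    Match1 t b s1 -> Match ts bs s2 -> sdunion_rel s1 s2 s ->
    Match (t :: ts) (b :: bs) s
with Match1 : tfield -> name -> subst name -> Prop :=
| M1_prot b : Match1 (TProt b) b sempty
| M1_bind x b : Match1 (TBind x) b (single x b).

(** the translations; the fresh binding names are passed explicitly:
    [patt c x ts] uses x as the fresh name of the clause patt(),
    [patb c xs bs] uses the names of xs (in order) as its fresh names. *)
Definition pat_of_field (t : tfield) : pat :=
  match t with TBind x => PBind x | TProt b => PProt b end.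

Fixpoint patt (c x : name) (ts : template) : pat :=
  match ts with
  | [::] => PComp (PBind x) (PVar c)
  | t :: ts' => PComp (PComp (pat_of_field t) (PVar c)) (patt c x ts')
  end.

Fixpoint patb (c : name) (xs : seq name) (bs : datum) : pat :=
  match bs, xs with
  | [::], x :: _ => PComp (PVar c) (PBind x)
  | [::], [::] => PComp (PVar c) (PBind 0) (* unused: size xs = size bs + 1 *)
  | b :: bs', x :: xs' => PComp (PComp (PVar b) (PBind x)) (patb c xs' bs')
  | b :: bs', [::] => PComp (PComp (PVar b) (PBind 0)) (patb c [::] bs') (* unused *)
  end.

Definition lift_subst (s : subst name) : subst pat := fun n => omap PVar (s n).

From mathcomp Require Import all_boot.
From Stdlib Require Import FunctionalExtensionality.

Set Implicit Arguments.
Unset Strict Implicit.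
Unset Printing Implicit Defensive.

(* The unification of patt(ts) with patb(bs) decomposes field by field: the
   i-th field of the template is matched against the pattern [b_i . \y_i], and
   a field [\z] binds z to b_i exactly as Match does, while a protected field
   ['b'] unifies iff it equals b_i. The trailing [\x . c] against [c . \y]
   contributes the extra bindings c/x and c/y. Since the input variables of the
   template are distinct and x is fresh, the per-field substitutions combine
   disjointly, which gives both directions; the substitution sigma is recovered
   from the unifier because x is outside its domain. *)

Section SubstAlgebra.

Variable A : Type.
Implicit Types (s : subst A) (v : A) (l : seq name).

Lemma sunions0 s : sunion s sempty = s.
Proof. by apply: functional_extensionality => n; rewrite /sunion; case: (s n). Qed.

Lemma sunionA s1 s2 s3 : sunion s1 (sunion s2 s3) = sunion (sunion s1 s2) s3.
Proof. by apply: functional_extensionality => n; rewrite /sunion; case: (s1 n). Qed.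

Lemma sunion_rel0s s : sunion_rel sempty s s.
Proof. by []. Qed.

Lemma sunion_rels0 s : sunion_rel s sempty s.
Proof. by split; rewrite ?sunions0. Qed.

Lemma sunion_rel_disjoint s1 s2 :
  (forall n, dom s1 n -> s2 n = None) -> sunion_rel s1 s2 (sunion s1 s2).
Proof. by move=> disj; split=> // n v w s1n; rewrite disj // /dom s1n. Qed.

Definition subst_on l v : subst A := fun n => if n \in l then Some v else None.

Lemma subst_on1 y v : subst_on [:: y] v = single y v.
Proof. by apply: functional_extensionality => n; rewrite /subst_on inE. Qed.

Lemma sunion_rel_subst_on l1 l2 v :
  sunion_rel (subst_on l1 v) (subst_on l2 v) (subst_on (l1 ++ l2) v).
Proof.
split=> [n w w'|]; rewrite /subst_on; first by do 2!case: ifP => // _ [<-].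
by apply: functional_extensionality => n; rewrite /sunion mem_cat; case: (n \in l1).
Qed.

End SubstAlgebra.

Lemma lift_subst_single x b : lift_subst (single x b) = single x (PVar b).
Proof. by apply: functional_extensionality => n; rewrite /lift_subst /single; case: eqP. Qed.

Lemma lift_subst_sunion s1 s2 :
  lift_subst (sunion s1 s2) = sunion (lift_subst s1) (lift_subst s2).
Proof. by apply: functional_extensionality => n; rewrite /lift_subst /sunion; case: (s1 n). Qed.

Lemma sunion_lift_single_inj x v s1 s2 : ~ dom s1 x -> ~ dom s2 x ->
  sunion (lift_subst s1) (single x v) = sunion (lift_subst s2) (single x v) -> s1 = s2.
Proof.
rewrite /dom => s1x s2x E; apply: functional_extensionality => n.
move: (congr1 (fun s => s n) E).
rewrite /sunion /lift_subst /single; case: eqP => [->|_].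
  by case: (s1 x) s1x => [? []|] //; case: (s2 x) s2x => [? []|].
by case: (s1 n) => [?|]; case: (s2 n) => [?|] //= [->].
Qed.

Lemma input_vars_template_names ts : {subset input_vars ts <= template_names ts}.
Proof.
elim: ts => [|[z|b] ts IH] n //=; rewrite ?inE; last by move/IH->; rewrite orbT.
by case/orP=> [->|/IH->] //; rewrite orbT.
Qed.

Lemma input_vars_cons t ts : input_vars (t :: ts) = tvars t ++ input_vars ts.
Proof. by []. Qed.

Lemma bn_patt c x ts : bn (patt c x ts) = input_vars ts ++ [:: x].
Proof. by elim: ts => [|[z|b] ts IH] //=; rewrite IH. Qed.

Lemma dom_Match1 t b s : Match1 t b s -> forall n, dom s n <-> n \in tvars t.
Proof.
case=> [b'|z b'] n /=; rewrite /dom ?inE /single; first by split.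
by case: eqP.
Qed.

Lemma dom_Match ts bs s : Match ts bs s -> forall n, dom s n <-> n \in input_vars ts.
Proof.
elim=> {ts bs s} [|t ts b bs s1 s2 s m1 _ IH [_ ->]] n; first by rewrite /dom; split.
move: (dom_Match1 m1 n) (IH n); rewrite input_vars_cons mem_cat /dom /sunion.
case: (s1 n) => [v|] [dom_t t_dom] [dom_ts ts_dom]; split=> //.
- by rewrite dom_t.
- by move/dom_ts ->; rewrite orbT.
- by case/orP=> [/t_dom|/ts_dom].
Qed.

(* When xs runs out, patb falls back on the name 0, so no size condition on xs
   is needed for the two shape lemmas, nor for the results built on them. *)
Lemma patb_nil c xs : exists y, patb c xs [::] = PComp (PVar c) (PBind y).
Proof. by case: xs => [|y xs]; eexists. Qed.

Lemma patb_cons c xs b bs : exists y xs',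
  patb c xs (b :: bs) = PComp (PComp (PVar b) (PBind y)) (patb c xs' bs).
Proof. by case: xs => [|y xs]; do 2!eexists. Qed.

Lemma UnifyCE p1 p2 q1 q2 s r : Unify (PComp p1 p2) (PComp q1 q2) s r ->
  exists s1 s2 r1 r2,
    [/\ Unify p1 q1 s1 r1, Unify p2 q2 s2 r2, sunion_rel s1 s2 s & sunion_rel r1 r2 r].
Proof.
move=> U; inversion U as [| | | | | |? ? ? ? s1 s2 r1 r2 ? ? U1 U2 Es Er].
by exists s1, s2, r1, r2.
Qed.

Lemma UnifyBLE x q s r : Unify (PBind x) q s r -> communicable q /\ s = single x q.
Proof. by move=> U; inversion U. Qed.

Lemma UnifyBRE q y s r : Unify q (PBind y) s r -> communicable q /\ s = sempty.
Proof. by move=> U; inversion U. Qed.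

Lemma Unify_field c t b y s : Match1 t b s ->
  Unify (PComp (pat_of_field t) (PVar c)) (PComp (PVar b) (PBind y))
        (lift_subst s) (single y (PVar c)).
Proof.
have Ucy : Unify (PVar c) (PBind y) sempty (single y (PVar c)) by exact: U_BR.
case=> [b'|z b'] /=.
  exact: U_C (U_PV b') Ucy (sunion_rel0s _) (sunion_rel0s _).
apply: U_C (@U_BL z (PVar b') I) Ucy _ (sunion_rel0s _).
by rewrite lift_subst_single; exact: sunion_rels0.
Qed.

Lemma Unify_field_Match1 c t b y s r :
  Unify (PComp (pat_of_field t) (PVar c)) (PComp (PVar b) (PBind y)) s r ->
  exists2 m, Match1 t b m & s = lift_subst m.
Proof.
case/UnifyCE=> s1 [s2 [r1 [r2 [Ut Ucy [_ ->] _]]]].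
have [_ ->] := UnifyBRE Ucy; rewrite sunions0.
case: t Ut => [z|b'] /= Ut; inversion Ut; subst.
  by exists (single z b); [exact: M1_bind | rewrite lift_subst_single].
by exists sempty; first exact: M1_prot.
Qed.

Lemma Unify_patt_patb c x xs ts bs s : x \notin input_vars ts -> Match ts bs s ->
  Unify (patt c x ts) (patb c xs bs)
        (sunion (lift_subst s) (single x (PVar c))) (subst_on (bn (patb c xs bs)) (PVar c)).
Proof.
move=> + m; elim: m xs => {ts bs s} [|t ts b bs s1 s2 s m1 m IH [disj ->]] xs.
  have [y ->] := patb_nil c xs; rewrite /= subst_on1 => _.
  exact: U_C (@U_BL x (PVar c) I) (@U_BR y (PVar c) I)
             (sunion_rels0 _) (sunion_rel0s _).
rewrite input_vars_cons mem_cat negb_or => /andP[xt xts].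
have [y [xs' ->]] := patb_cons c xs b bs.
apply: U_C (Unify_field c y m1) (IH xs' xts) _ _; last first.
  by rewrite -subst_on1; exact: sunion_rel_subst_on.
rewrite lift_subst_sunion -sunionA; apply: sunion_rel_disjoint => n.
move=> s1n; have dom_s1n : dom s1 n by move: s1n; rewrite /dom /lift_subst; case: (s1 n).
have nx : (n == x) = false.
  by apply: contraNF xt => /eqP <-; apply/(dom_Match1 m1).
rewrite /sunion /lift_subst /single nx.
move: (disj n dom_s1n); rewrite /dom.
by case: (s2 n) => // a not_dom; exfalso; apply: not_dom.
Qed.

Lemma Unify_patt_patb_Match c x xs ts bs s r : uniq (input_vars ts) ->
  Unify (patt c x ts) (patb c xs bs) s r ->
  exists2 m, Match ts bs m & s = sunion (lift_subst m) (single x (PVar c)).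
Proof.
elim: ts bs xs s r => [|t ts IH] [|b bs] xs s r uniq_ts.
- have [y ->] := patb_nil c xs; case/UnifyCE=> s1 [s2 [r1 [r2 [Ux Uc [_ ->] _]]]].
  exists sempty; first exact: M_nil.
  by have [_ ->] := UnifyBRE Uc; have [_ ->] := UnifyBLE Ux; rewrite sunions0.
- have [y [xs' ->]] := patb_cons c xs b bs.
  by case/UnifyCE=> ? [? [? [? [/UnifyBLE[[_ []] _] _ _ _]]]].
- have [y ->] := patb_nil c xs.
  by case/UnifyCE=> ? [? [? [? [Ut _ _ _]]]]; inversion Ut.
have [y [xs' ->]] := patb_cons c xs b bs.
case/UnifyCE=> s1 [s2 [r1 [r2 [Ut Uts [_ ->] _]]]].
move: uniq_ts; rewrite input_vars_cons cat_uniq => /and3P[_ tts uniq_ts].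
have [m1 M1 ->] := Unify_field_Match1 Ut.
have [m2 M2 ->] := IH _ _ _ _ uniq_ts Uts.
exists (sunion m1 m2); last by rewrite sunionA lift_subst_sunion.
apply: (M_cons M1 M2); split=> // n /(dom_Match1 M1) nt /(dom_Match M2) nts.
by move/hasP: tts; apply; exists n.
Qed.

Theorem lemma4p6 (c x : name) (xs : seq name) (ts : template) (bs : datum)
    (sigma : subst name) :
  (* well-formed Linda template: input variables pairwise distinct *)
  uniq (input_vars ts) ->
  (* freshness of the names introduced by patt() and patb(_) *)
  x \notin template_names ts -> x \notin bs -> x != c ->
  uniq xs -> size xs = (size bs).+1 ->
  (forall y, y \in xs -> [/\ y \notin template_names ts, y \notin bs, y != c & y != x]) ->
  Match ts bs sigma <->
  (Unify (patt c x ts) (patb c xs bs)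
         (sunion (lift_subst sigma) (single x (PVar c)))
         (fun n => if n \in bn (patb c xs bs) then Some (PVar c) else None)
   /\ ~ dom sigma x
   /\ (forall n, dom sigma n \/ n = x <-> n \in bn (patt c x ts))).
Proof.
(* Only the freshness of x for the input variables matters; the names in xs
   enter the unifier solely through bn (patb c xs bs). *)
move=> uniq_ts x_fresh _ _ _ _ _.
have x_iv : x \notin input_vars ts.
  by apply: contra x_fresh; exact: input_vars_template_names.
have dom_x m : Match ts bs m -> ~ dom m x.
  by move=> M /(dom_Match M); apply/negP.
split=> [M | [U [sigma_x _]]].
  split; first exact: Unify_patt_patb.
  split=> [|n]; first exact: dom_x.
  have [dom_iv iv_dom] := dom_Match M n; rewrite bn_patt mem_cat inE.
  by split=> [[/dom_iv->|->] | /orP[/iv_dom|/eqP]]; rewrite ?eqxx ?orbT; auto.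
have [m M E] := Unify_patt_patb_Match uniq_ts U.
by rewrite (sunion_lift_single_inj sigma_x (dom_x m M) E).
Qed.
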